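(* Let $k \ge 2$ be an integer. Among $2^k$ identical-looking coins, exactly two of which are counterfeit, there is an adaptive strategy that determines both counterfeit coins using at most $k+1$ weighings on a 5-way scale.
   Context: Coins look identical; all genuine coins have one common weight, all counterfeit coins have one common weight strictly less than the genuine weight. A weighing places two disjoint sets of coins of equal cardinality on the left and right pans. Let $d$ = (number of counterfeit coins on the left pan) $-$ (number of counterfeit coins on the right pan). A 5-way scale reports MUCH LESS if $d \ge 2$, LESS if $d = 1$, EQUAL if $d = 0$, MORE if $d = -1$, MUCH MORE if $d \le -2$. A strategy chooses each weighing possibly depending on previous outcomes; it determines the counterfeit coins if the sequence of outcomes uniquely identifies the set of counterfeit coins. *)

From mathcomp Require Import all_boot.
Set Implicit Arguments. Unset Strict Implicit. Unset Printing Implicit Defensive.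

Inductive outcome := MuchLess | Less | Equal | More | MuchMore.

Definition weigh (n : nat) (S L R : {set 'I_n}) : outcome :=
  let a := #|S :&: L| in let b := #|S :&: R| in
  if b.+2 <= a then MuchLess
  else if a == b.+1 then Less
  else if a == b then Equal
  else if b == a.+1 then More
  else MuchMore.

Inductive strategy (n : nat) :=
| Stop
| Weigh (L R : {set 'I_n}) (next : outcome -> strategy n).

Fixpoint transcript (n : nat) (t : strategy n) (S : {set 'I_n}) : seq outcome :=
  match t with
  | Stop => [::]
  | Weigh L R f => let o := weigh S L R in o :: transcript (f o) S
  end.

Fixpoint legal_on (n : nat) (t : strategy n) (S : {set 'I_n}) : Prop :=
  match t with
  | Stop => True
  | Weigh L R f =>
      [/\ [disjoint L & R], #|L| = #|R| & legal_on (f (weigh S L R)) S]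
  end.

(* Three kinds of
   single weighings refine knowledge about the pair {x, y}:
   - halving:   both coins lie in L u R; the reading says whether both are in
                L, both in R, or one in each;
   - locating:  exactly one coin lies in L u R; the reading says which pan;
   - refining:  x lies in A1 u A2 and y in B1 u B2; weighing A1 u B2 against
                A2 u F (F a block of genuine coins) tells both halves at once.
   Iterating refining on dyadic blocks solves "one coin in each of two blocks
   of size 2^j" in j weighings; combined with halving this solves "two coins
   in a block of size 2^j" in j weighings, provided a disjoint block of
   genuine coins is available.  For n = 4q coins (q = 2^(k-2)) a first halving
   of the two halves either reduces to that situation, or leaves one coin in
   each half; then two locating weighings free a quarter of genuine coins and
   refining finishes, for k + 1 weighings in total. *)
From mathcomp Require Import all_boot zify.
Set Implicit Arguments. Unset Strict Implicit. Unset Printing Implicit Defensive.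

Lemma card_pairI (T : finType) (x y : T) (A : {set T}) : x != y ->
  #|[set x; y] :&: A| = (x \in A) + (y \in A).
Proof.
move=> xy; rewrite (cardsD1 x) (cardsD1 y) (_ : _ :\ x :\ y = set0) ?cards0.
  by rewrite !inE !eqxx [y == x]eq_sym (negbTE xy) /= addn0.
by apply/setP => z; rewrite !inE; case: eqP; case: eqP.
Qed.

Lemma cards_disjointU (T : finType) (A B : {set T}) :
  [disjoint A & B] -> #|A :|: B| = #|A| + #|B|.
Proof. by move=> dAB; apply/eqP; rewrite (leq_card_setU A B).2. Qed.

Lemma in_setU_r (T : finType) (A B : {set T}) x : x \in A :|: B -> x \notin A -> x \in B.
Proof. by rewrite inE => /orP [->|]. Qed.

Section Strategies.
Variable n : nat.
Implicit Types (L R A B Y F : {set 'I_n}) (t : strategy n) (P : {set 'I_n} -> Prop).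

Lemma weigh_both_on_pans L R (x y : 'I_n) : [disjoint L & R] -> x != y ->
  x \in L :|: R -> y \in L :|: R ->
  weigh [set x; y] L R =
  if x \in L then (if y \in L then MuchLess else Equal)
  else (if y \in L then Equal else MuchMore).
Proof.
move=> dLR xy xLR yLR; rewrite /weigh !card_pairI //.
by case: (boolP (x \in L)) => [/(disjointFr dLR) | /(in_setU_r xLR)] ->;
   case: (boolP (y \in L)) => [/(disjointFr dLR) | /(in_setU_r yLR)] ->.
Qed.

Lemma weigh_off_right_pan L R (x y : 'I_n) : [disjoint L & R] -> x != y ->
  x \in L :|: R -> y \notin R ->
  weigh [set x; y] L R =
  if x \in L then (if y \in L then MuchLess else Less)
  else (if y \in L then Equal else More).
Proof.
move=> dLR xy xLR /negbTE yR; rewrite /weigh !card_pairI // yR.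
by case: (boolP (x \in L)) => [/(disjointFr dLR) | /(in_setU_r xLR)] ->; case: (y \in L).
Qed.

Definition solves t P N :=
  (forall S, P S -> legal_on t S /\ size (transcript t S) <= N) /\
  (forall S1 S2, P S1 -> P S2 -> transcript t S1 = transcript t S2 -> S1 = S2).

Lemma solves_stop P N : (forall S1 S2, P S1 -> P S2 -> S1 = S2) -> solves (Stop n) P N.
Proof. by move=> uniqP; split=> // S1 S2 P1 P2 _; apply: uniqP. Qed.

Lemma solves_weigh L R (f : outcome -> strategy n) P (Q : outcome -> {set 'I_n} -> Prop) N :
  [disjoint L & R] -> #|L| = #|R| -> (forall S, P S -> Q (weigh S L R) S) ->
  (forall o, solves (f o) (Q o) N) -> solves (Weigh L R f) P N.+1.
Proof.
move=> dLR cLR PQ solf; split=> [S PS | S1 S2 P1 P2 /= [o12 tr12]].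
  by have [/(_ S (PQ S PS)) [legS sizeS] _] := solf (weigh S L R).
have [_ uniq1] := solf (weigh S1 L R); apply: uniq1; first exact: PQ.
  by rewrite o12; apply: PQ.
by rewrite {2}o12.
Qed.

Lemma solves_weaken t P Q N M : solves t P N -> (forall S, Q S -> P S) -> N <= M ->
  solves t Q M.
Proof.
move=> [solP uniqP] QP NM; split=> [S /QP /solP [legS szS] | S1 S2 /QP Q1 /QP Q2].
  by split=> //; apply: leq_trans NM.
exact: uniqP.
Qed.

(* The empty family, for readings that cannot occur. *)
Definition no_pair (S : {set 'I_n}) : Prop := False.

Lemma solves_no_pair N : solves (Stop n) no_pair N.
Proof. by apply: solves_stop. Qed.

Definition pair_within A S :=
  exists x y : 'I_n, [/\ x != y, S = [set x; y], x \in A & y \in A].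

Definition pair_across A B S := exists x y : 'I_n, [/\ S = [set x; y], x \in A & y \in B].

Lemma pair_across_sym A B S : pair_across A B S -> pair_across B A S.
Proof. by move=> [x [y [-> xA yB]]]; exists y, x; rewrite setUC. Qed.

Definition halving L R (tL tR tLR : strategy n) : strategy n :=
  Weigh L R (fun o => match o with
    | MuchLess => tL | Equal => tLR | MuchMore => tR | _ => Stop n end).

Lemma halving_solves L R tL tR tLR N : [disjoint L & R] -> #|L| = #|R| ->
  solves tL (pair_within L) N -> solves tR (pair_within R) N ->
  solves tLR (pair_across L R) N ->
  solves (halving L R tL tR tLR) (pair_within (L :|: R)) N.+1.
Proof.
move=> dLR cLR solL solR solLR.
apply: (solves_weigh (Q := fun o => match o with
  | MuchLess => pair_within L | Equal => pair_across L R
  | MuchMore => pair_within R | _ => no_pair end)) => //;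
  last by case=> //; apply: solves_no_pair.
move=> _ [x [y [xy -> xLR yLR]]]; rewrite weigh_both_on_pans //.
case: (boolP (x \in L)) => xL; case: (boolP (y \in L)) => yL.
- by exists x, y.
- by exists x, y; split=> //; apply: in_setU_r yLR yL.
- by exists y, x; rewrite setUC; split=> //; apply: in_setU_r xLR xL.
- by exists x, y; split=> //; [exact: in_setU_r xLR xL | exact: in_setU_r yLR yL].
Qed.

Definition locating L R (tL tR : strategy n) : strategy n :=
  Weigh L R (fun o => match o with Less => tL | More => tR | _ => Stop n end).

Lemma locating_solves L R Y tL tR N :
  [disjoint L & R] -> #|L| = #|R| -> [disjoint L :|: R & Y] ->
  solves tL (pair_across L Y) N -> solves tR (pair_across R Y) N ->
  solves (locating L R tL tR) (pair_across (L :|: R) Y) N.+1.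
Proof.
move=> dLR cLR dY solL solR.
apply: (solves_weigh (Q := fun o => match o with
  | Less => pair_across L Y | More => pair_across R Y | _ => no_pair end)) => //;
  last by case=> //; apply: solves_no_pair.
move=> _ [x [y [-> xLR yY]]].
have yLR : y \in L :|: R = false by rewrite (disjointFl dY).
have xy : x != y by apply: contraTneq xLR => ->; rewrite yLR.
move: yLR; rewrite inE => /norP [/negbTE yL yR].
rewrite weigh_off_right_pan // yL.
case: (boolP (x \in L)) => xL; exists x, y; split=> //.
exact: in_setU_r xLR xL.
Qed.

(* Knowing x in A1 u A2 and y in B1 u B2, the weighing A1 u B2 against A2 u F
   (F free of counterfeits) reveals both halves: d = [x in A1] + [y in B2]
   - [x in A2] takes the four values 2, 1, 0, -1. *)
Definition refining A1 A2 B1 B2 F (t11 t12 t21 t22 : strategy n) : strategy n :=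
  Weigh (A1 :|: B2) (A2 :|: F) (fun o => match o with
    | MuchLess => t12 | Less => t11 | Equal => t22 | More => t21
    | MuchMore => Stop n end).

Lemma refining_solves A1 A2 B1 B2 F t11 t12 t21 t22 N :
  [disjoint A1 :|: B2 & A2 :|: F] -> #|A1 :|: B2| = #|A2 :|: F| ->
  [disjoint A1 :|: A2 & B1 :|: B2] -> [disjoint B1 & B2 :|: F] ->
  solves t11 (pair_across A1 B1) N -> solves t12 (pair_across A1 B2) N ->
  solves t21 (pair_across A2 B1) N -> solves t22 (pair_across A2 B2) N ->
  solves (refining A1 A2 B1 B2 F t11 t12 t21 t22)
         (pair_across (A1 :|: A2) (B1 :|: B2)) N.+1.
Proof.
move=> dLR cLR dAB dB sol11 sol12 sol21 sol22.
apply: (solves_weigh (Q := fun o => match o with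
  | MuchLess => pair_across A1 B2 | Less => pair_across A1 B1
  | Equal => pair_across A2 B2 | More => pair_across A2 B1
  | MuchMore => no_pair end)) => //;
  last by case=> //; apply: solves_no_pair.
move=> _ [x [y [-> xA yB]]].
have yA : y \in A1 :|: A2 = false by rewrite (disjointFl dAB).
have xy : x != y by apply: contraTneq xA => ->; rewrite yA.
move: yA; rewrite inE => /norP [/negbTE yA1 /negbTE yA2].
have xA2 : x \notin A1 -> x \in A2 by apply: in_setU_r.
have yB1 : y \notin B2 -> y \in B1 by apply: in_setU_r; rewrite setUC.
have xL : (x \in A1 :|: B2) = (x \in A1).
  case: (boolP (x \in A1)) => [|/xA2 x2]; first by rewrite inE => ->.
  by rewrite (disjointFl dLR) // inE x2.
have yR : y \notin A2 :|: F.
  case: (boolP (y \in B2)) => [y2 | /yB1 y1].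
    by rewrite (disjointFr dLR) // inE y2 orbT.
  by rewrite inE yA2 /=; apply: contraFN (disjointFr dB y1) => yF; rewrite inE yF orbT.
have xLR : x \in (A1 :|: B2) :|: (A2 :|: F).
  by move: xA; rewrite !inE => /orP [->|->]; rewrite ?orbT.
rewrite weigh_off_right_pan // xL inE yA1 /=.
by case: (boolP (x \in A1)) => [x1|/xA2 x2]; case: (boolP (y \in B2)) => [y2|/yB1 y1];
  exists x, y.
Qed.

Definition block (lo len : nat) : {set 'I_n} := [set i : 'I_n | lo <= i < lo + len].

Lemma mem_block lo len (i : 'I_n) : (i \in block lo len) = (lo <= i < lo + len).
Proof. by rewrite inE. Qed.

Lemma card_block lo len : lo + len <= n -> #|block lo len| = len.
Proof.
move=> hn; rewrite -sum1dep_card -(big_mkord (fun i => lo <= i < lo + len) (fun _ => 1)).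
have -> : \sum_(0 <= i < n | lo <= i < lo + len) 1 = \sum_(lo <= i < lo + len) 1.
  rewrite (big_nat_widen _ _ _ _ _ hn) (big_nat_widenl _ _ _ _ _ (leq0n lo)).
  by apply: eq_bigl => i; rewrite andbC.
by rewrite sum_nat_const_nat muln1 addKn.
Qed.

Lemma block_cat lo h : block lo (2 * h) = block lo h :|: block (lo + h) h.
Proof. by apply/setP => i; rewrite !inE; lia. Qed.

Lemma block1_eq lo (x y : 'I_n) : x \in block lo 1 -> y \in block lo 1 -> x = y.
Proof. by rewrite !mem_block => hx hy; apply: val_inj => /=; lia. Qed.

(* Disjointness of unions of blocks is interval arithmetic. *)
Ltac blocks_disjoint := apply/pred0P => z /=; rewrite !inE; lia.

(* One coin in [a, a + 2^j), the other in [b, b + 2^j); [f, f + 2^j) is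
   known to be genuine. *)
Fixpoint across_search (a b f j : nat) : strategy n :=
  if j is j'.+1 then
    let h := 2 ^ j' in
    refining (block a h) (block (a + h) h) (block b h) (block (b + h) h) (block f h)
      (across_search a b f j') (across_search a (b + h) f j')
      (across_search (a + h) b f j') (across_search (a + h) (b + h) f j')
  else Stop n.

Lemma across_search_solves j a b f :
  a + 2 ^ j <= n -> b + 2 ^ j <= n -> f + 2 ^ j <= n ->
  a + 2 ^ j <= b \/ b + 2 ^ j <= a -> a + 2 ^ j <= f \/ f + 2 ^ j <= a ->
  b + 2 ^ j <= f \/ f + 2 ^ j <= b ->
  solves (across_search a b f j) (pair_across (block a (2 ^ j)) (block b (2 ^ j))) j.
Proof.
elim: j a b f => [|j IH] a b f ha hb hf dab daf dbf.
  apply: solves_stop => _ _ [x1 [y1 [-> x1a y1b]]] [x2 [y2 [-> x2a y2b]]].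
  by rewrite (block1_eq x1a x2a) (block1_eq y1b y2b).
rewrite expnS in ha hb hf dab daf dbf *; rewrite !block_cat /=.
apply: refining_solves; try apply: IH; try lia; try blocks_disjoint.
by rewrite !cards_disjointU ?card_block //; try lia; blocks_disjoint.
Qed.

(* Both coins in [s, s + 2^j); [g, g + 2^j) is known to be genuine. *)
Fixpoint within_search (s g j : nat) : strategy n :=
  if j is j'.+1 then
    let h := 2 ^ j' in
    halving (block s h) (block (s + h) h)
      (within_search s (s + h) j') (within_search (s + h) s j')
      (across_search s (s + h) g j')
  else Stop n.

Lemma within_search_solves j s g :
  s + 2 ^ j <= n -> g + 2 ^ j <= n -> s + 2 ^ j <= g \/ g + 2 ^ j <= s ->
  solves (within_search s g j) (pair_within (block s (2 ^ j))) j.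
Proof.
elim: j s g => [|j IH] s g hs hg dsg.
  apply: solves_stop => S1 S2 [x [y [/eqP xy _ xs ys]]].
  by case: xy; apply: block1_eq xs ys.
rewrite expnS in hs hg dsg *; rewrite block_cat /=.
apply: halving_solves; try apply: IH; try apply: across_search_solves; try lia.
  by blocks_disjoint.
by rewrite !card_block //; lia.
Qed.

(* n = 4q coins, one counterfeit in each half: locate the first one to a
   quarter, so that the other quarter of the first half becomes a genuine
   filler, then locate the second one and refine. *)
Definition cross_search k : strategy n :=
  let q := 2 ^ k in
  locating (block 0 q) (block q q)
    (locating (block (2 * q) q) (block (2 * q + q) q)
       (across_search (2 * q) 0 q k) (across_search (2 * q + q) 0 q k))
    (locating (block (2 * q) q) (block (2 * q + q) q)
       (across_search (2 * q) q 0 k) (across_search (2 * q + q) q 0 k)).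

Lemma cross_search_solves k : n = 4 * 2 ^ k ->
  solves (cross_search k)
    (pair_across (block 0 (2 * 2 ^ k)) (block (2 * 2 ^ k) (2 * 2 ^ k))) k.+2.
Proof.
move=> hn; rewrite /cross_search; set q := 2 ^ k in hn *.
have q_gt0 : 0 < q by rewrite expn_gt0.
have locate_second u f : u + q <= 2 * q -> f + q <= 2 * q -> u + q <= f \/ f + q <= u ->
  solves (locating (block (2 * q) q) (block (2 * q + q) q)
            (across_search (2 * q) u f k) (across_search (2 * q + q) u f k))
         (pair_across (block u q) (block (2 * q) (2 * q))) k.+1.
  move=> hu hf duf; apply: (solves_weaken _ (@pair_across_sym _ _) (leqnn _)).
  rewrite block_cat; apply: locating_solves; try apply: across_search_solves; try lia;
    try blocks_disjoint.
  by rewrite !card_block //; lia.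
rewrite block_cat add0n; apply: locating_solves; try apply: locate_second; try lia;
  try blocks_disjoint.
by rewrite !card_block //; lia.
Qed.

(* n = 4q coins: halve; both coins in one half is within_search with the
   other half as filler, one coin in each half is cross_search. *)
Definition coin_search k : strategy n :=
  let q := 2 ^ k in
  halving (block 0 (2 * q)) (block (2 * q) (2 * q))
    (within_search 0 (2 * q) k.+1) (within_search (2 * q) 0 k.+1) (cross_search k).

Lemma coin_search_solves k : n = 4 * 2 ^ k ->
  solves (coin_search k) (pair_within (block 0 n)) k.+3.
Proof.
move=> hn; have q_gt0 : 0 < 2 ^ k by rewrite expn_gt0.
rewrite [X in block 0 X]hn -[4]/(2 * 2) -mulnA block_cat add0n.
apply: halving_solves; last exact: cross_search_solves.
- by blocks_disjoint.
- by rewrite !card_block //; lia.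
- by apply: solves_weaken (within_search_solves _ _ _) _ _; rewrite ?expnS //; lia.
- by apply: solves_weaken (within_search_solves _ _ _) _ _; rewrite ?expnS //; lia.
Qed.

End Strategies.

Theorem mainTheorem7 (k : nat) (hk : 2 <= k) :
  exists t : strategy (2 ^ k),
    (forall S : {set 'I_(2 ^ k)}, #|S| = 2 ->
       legal_on t S /\ size (transcript t S) <= k.+1) /\
    (forall S1 S2 : {set 'I_(2 ^ k)}, #|S1| = 2 -> #|S2| = 2 ->
       transcript t S1 = transcript t S2 -> S1 = S2).
Proof.
case: k hk => [|[|k]] // _.
have hn : 2 ^ k.+2 = 4 * 2 ^ k by rewrite !expnS mulnA.
have [short_and_legal distinguishes] := coin_search_solves hn.
have pair_of_two (S : {set 'I_(2 ^ k.+2)}) :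
    #|S| = 2 -> pair_within (block (2 ^ k.+2) 0 (2 ^ k.+2)) S.
  by move/eqP/cards2P => [x [y [xy ->]]]; exists x, y; rewrite !mem_block !ltn_ord.
exists (coin_search (2 ^ k.+2) k).
split=> [S /pair_of_two | S1 S2 /pair_of_two P1 /pair_of_two P2].
  exact: short_and_legal.
exact: distinguishes.
Qed.
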